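(* Let $R$ be a saturated transfer system on a finite modular lattice $M$ and let $x,y,x\wedge y,x\vee y$ form a covering diamond in $M$. If three of the four covering relations $x\wedge y\le x$, $x\wedge y\le y$, $x\le x\vee y$, $y\le x\vee y$ belong to $R$, then the fourth also belongs to $R$.
   Context: A lattice $M$ is modular if $a\le b$ implies $a\vee(x\wedge b)=(a\vee x)\wedge b$. A transfer system on a finite lattice $(P,\le)$ is a partial order $R$ refining $\le$ closed under restriction: $x\,R\,z$ and $y\le z$ imply $(x\wedge y)\,R\,y$; it is saturated if $x\,R\,y$, $y\le z$ and $x\,R\,z$ imply $y\,R\,z$. A covering diamond is a quadruple $x,y,x\wedge y,x\vee y$ with $x\ne y$ such that $x\vee y$ covers $x$ and $y$, and $x$ and $y$ both cover $x\wedge y$. *)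

From mathcomp Require Import all_boot all_order.
Set Implicit Arguments. Unset Strict Implicit. Unset Printing Implicit Defensive.
Import Order.TTheory.
Local Open Scope order_scope.

Definition modular_lattice d (M : latticeType d) : Prop :=
  forall a b x : M, a <= b -> a `|` (x `&` b) = (a `|` x) `&` b.

Definition covers d (M : porderType d) (y x : M) : Prop :=
  x < y /\ forall z : M, x < z -> z < y -> False.

Definition refining_partial_order d (M : porderType d) (R : rel M) : Prop :=
  [/\ forall x, R x x,
      forall x y, R x y -> R y x -> x = y,
      forall x y z, R x y -> R y z -> R x z
    & forall x y, R x y -> x <= y].

Definition transfer_system d (M : latticeType d) (R : rel M) : Prop :=
  refining_partial_order R /\
  forall x y z : M, R x z -> y <= z -> R (x `&` y) y.

Definition saturated d (M : latticeType d) (R : rel M) : Prop :=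
  forall x y z : M, R x y -> y <= z -> R x z -> R y z.

Definition covering_diamond d (M : latticeType d) (x y : M) : Prop :=
  [/\ x != y, covers (x `|` y) x, covers (x `|` y) y,
      covers x (x `&` y) & covers y (x `&` y)].

From mathcomp Require Import all_boot all_order.
Local Open Scope order_scope.
Import Order.TTheory.

(* Write m = x `&` y and j = x `|` y.  Two closure properties of R suffice:
   - a bottom edge m R x follows from the other bottom edge m R y and the
     opposite top edge y R j: transitivity gives m R j, and restricting that
     relation along x <= j yields (m `&` x) R x, i.e. m R x;
   - a top edge x R j follows from m R x together with m R y and y R j:
     transitivity gives m R j, and saturation applied to m R x, x <= j,
     m R j yields x R j. *)

Section DiamondEdges.
Variables (d : Order.disp_t) (M : latticeType d) (R : rel M).

Lemma transfer_restrict (a b c : M) :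
  transfer_system R -> R a c -> a <= b -> b <= c -> R a b.
Proof.
move=> [_ Rres] Rac le_ab le_bc.
by have := Rres _ _ _ Rac le_bc; rewrite (meet_idPl le_ab).
Qed.

Lemma diamond_bottom_edge (m x y j : M) :
  transfer_system R -> m <= x -> x <= j -> R m y -> R y j -> R m x.
Proof.
move=> RT le_mx le_xj Rmy Ryj.
have [[_ _ Rtrans _] _] := RT.
exact: transfer_restrict RT (Rtrans _ _ _ Rmy Ryj) le_mx le_xj.
Qed.

Lemma diamond_top_edge (m x y j : M) :
  transfer_system R -> saturated R ->
  x <= j -> R m x -> R m y -> R y j -> R x j.
Proof.
move=> [[_ _ Rtrans _] _] Rsat le_xj Rmx Rmy Ryj.
exact: Rsat _ _ _ Rmx le_xj (Rtrans _ _ _ Rmy Ryj).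
Qed.

End DiamondEdges.

Theorem lemma3p5 (d : Order.disp_t) (M : finLatticeType d) (R : rel M) (x y : M) :
  modular_lattice M -> transfer_system R -> saturated R ->
  covering_diamond x y ->
  let c1 := R (x `&` y) x in
  let c2 := R (x `&` y) y in
  let c3 := R x (x `|` y) in
  let c4 := R y (x `|` y) in
  [/\ (c2 /\ c3 /\ c4 -> c1), (c1 /\ c3 /\ c4 -> c2),
      (c1 /\ c2 /\ c4 -> c3) & (c1 /\ c2 /\ c3 -> c4)].
Proof.
move=> _ RT Rsat _ /=.
split=> [[Rmy [_ Ryj]] | [Rmx [Rxj _]] | [Rmx [Rmy Ryj]] | [Rmx [Rmy Rxj]]].
- exact: diamond_bottom_edge RT (leIl x y) (leUl x y) Rmy Ryj.
- exact: diamond_bottom_edge RT (leIr y x) (leUr y x) Rmx Rxj.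
- exact: diamond_top_edge RT Rsat (leUl x y) Rmx Rmy Ryj.
- exact: diamond_top_edge RT Rsat (leUr y x) Rmy Rmx Rxj.
Qed.
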